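(* Consider two agents with weights $(w_1,w_2)$, where $r:=w_2/w_1\ge1$, and $m$ items with each utility $u_i(g)$ drawn independently from a PDF-bounded distribution $\mathcal{D}$. Then with probability at least $1-O(m^2/r)$, no weighted envy-free (WEF) allocation exists. The same holds for weighted proportionality (WPROP).
   Context: Utilities are additive. PDF-bounded: non-atomic with density between constants $\alpha,\beta>0$ on $[0,1]$. An allocation $(A_1,A_2)$ (partition of the items $M$) is WEF if $u_i(A_i)/w_i\ge u_i(A_j)/w_j$ for $i,j\in\{1,2\}$, and WPROP if $u_i(A_i)\ge\frac{w_i}{w_1+w_2}u_i(M)$ for $i\in\{1,2\}$. *)

From HB Require Import structures.
From mathcomp Require Import all_boot all_order all_algebra.
From mathcomp Require Import all_classical all_reals all_analysis.
Set Implicit Arguments. Unset Strict Implicit. Unset Printing Implicit Defensive.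
Import Order.TTheory GRing.Theory Num.Theory.
Import numFieldNormedType.Exports.
Local Open Scope classical_set_scope.
Local Open Scope ring_scope.

(* Agents are 'I_2 (agent 0 = "agent 1", agent 1 = "agent 2" of the paper);
   items are 'I_m.  An allocation (A_1,A_2) partitioning M is encoded as a
   map A : 'I_m -> 'I_2 sending each item to the agent that receives it. *)

Definition bundle_util (R : realType) (m : nat) (u : 'I_2 -> 'I_m -> R)
  (A : 'I_m -> 'I_2) (i j : 'I_2) : R :=
  \sum_(g < m | A g == j) u i g.

Definition total_util (R : realType) (m : nat) (u : 'I_2 -> 'I_m -> R)
  (i : 'I_2) : R := \sum_(g < m) u i g.

Definition WEF (R : realType) (m : nat) (w : 'I_2 -> R)
  (u : 'I_2 -> 'I_m -> R) (A : 'I_m -> 'I_2) : Prop :=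
  forall i j : 'I_2, bundle_util u A i j / w j <= bundle_util u A i i / w i.

Definition WPROP (R : realType) (m : nat) (w : 'I_2 -> R)
  (u : 'I_2 -> 'I_m -> R) (A : 'I_m -> 'I_2) : Prop :=
  forall i : 'I_2,
    w i / (w ord0 + w (lift ord0 ord0)) * total_util u i <= bundle_util u A i i.

(* mutual independence of a finite family of real random variables:
   for every family of Borel sets (taking B k = setT for the indices outside a
   subfamily gives the product rule for every subfamily) *)
Definition mutually_independent (R : realType) (d : measure_display)
  (Omega : measurableType d) (P : probability Omega R) (K : finType)
  (X : K -> Omega -> R) : Prop :=
  forall B : K -> set R, (forall k, measurable (B k)) ->
    P (\bigcap_k (X k @^-1` B k)) = (\prod_(k : K) P (X k @^-1` B k))%E.

Definition pdf_bounded (R : realType) (alpha beta : R) (f : R -> R) : Prop :=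
  measurable_fun setT f /\
  (forall x : R, 0 <= x <= 1 -> alpha <= f x <= beta) /\
  (forall x : R, ~ (0 <= x <= 1) -> f x = 0).

Definition has_density (R : realType) (d : measure_display)
  (Omega : measurableType d) (P : probability Omega R) (Y : Omega -> R)
  (f : R -> R) : Prop :=
  forall B : set R, measurable B ->
    P (Y @^-1` B) = (\int[lebesgue_measure]_(x in B) (f x)%:E)%E.

(* If every utility lies in ]c, 1] with c := m / r, no allocation is WEF. If
   agent 1 receives some item, agent 2 values agent 1's bundle above c and its
   own bundle at most m = c r, which violates WEF for the weight ratio r; if
   agent 1 receives nothing, it envies agent 2. For two agents, WPROP with the
   denominators cleared is the same condition as WEF. A utility leaves ]c, 1]
   with probability at most beta c, so a union bound over the 2m utilities
   gives probability at most 2 beta m^2 / r. *)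

From mathcomp Require Import all_boot all_order all_algebra.
From mathcomp Require Import all_classical all_reals all_analysis.
From mathcomp Require Import measurable_realfun lra ring.
Import Order.TTheory GRing.Theory Num.Theory.
Local Open Scope classical_set_scope.
Local Open Scope ring_scope.

Local Notation a := (ord0 : 'I_2).
Local Notation b := (lift ord0 ord0 : 'I_2).

Lemma ord2P (i : 'I_2) : i = a \/ i = b.
Proof. by case: i => [[|[|//]]] ?; [left|right]; apply: val_inj. Qed.

Definition WEF_cleared {R : realType} {m : nat} (w : 'I_2 -> R)
    (u : 'I_2 -> 'I_m -> R) (A : 'I_m -> 'I_2) : Prop :=
  w a * bundle_util u A a b <= w b * bundle_util u A a a /\
  w b * bundle_util u A b a <= w a * bundle_util u A b b.

Section two_agents.
Context {R : realType} {m : nat} {w : 'I_2 -> R} {u : 'I_2 -> 'I_m -> R}.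
Context {A : 'I_m -> 'I_2}.
Local Notation U := (bundle_util u A).

Lemma total_util_split i : total_util u i = U i a + U i b.
Proof.
rewrite /total_util (bigID (fun g => A g == a)) /=; congr (_ + _).
by apply: eq_bigl => g; case: (ord2P (A g)) => ->.
Qed.

Hypothesis w_gt0 : forall i, 0 < w i.

Lemma WEF_clearedE : WEF w u A <-> WEF_cleared w u A.
Proof.
have cross i j : U i j / w j <= U i i / w i <-> w i * U i j <= w j * U i i.
  by rewrite ler_pdivrMr // mulrAC ler_pdivlMr // mulrC [w j * _]mulrC.
split=> [W | [Wa Wb] i j]; first by split; apply/cross.
by case: (ord2P i) (ord2P j) => -> [] ->; rewrite ?lexx //; apply/cross.
Qed.

Lemma WPROP_clearedE : WPROP w u A <-> WEF_cleared w u A.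
Proof.
have wa := w_gt0 a; have wb := w_gt0 b.
have prop i : w i / (w a + w b) * total_util u i <= U i i <->
              w i * total_util u i <= (w a + w b) * U i i.
  by rewrite mulrAC ler_pdivrMr ?addr_gt0 // [_ * (w a + w b)]mulrC.
rewrite /WPROP /WEF_cleared; split=> [W | [Wa Wb] i].
  move: (W a) (W b) => /prop + /prop; rewrite !total_util_split; split; lra.
by apply/prop; rewrite total_util_split; case: (ord2P i) => ->; lra.
Qed.

Lemma bundle_util_ge_item i g : (forall g, 0 <= u i g) -> u i g <= U i (A g).
Proof.
by move=> u_ge0; rewrite /bundle_util (bigD1 g) //= lerDl sumr_ge0.
Qed.

Lemma bundle_util_le_size i j : (forall g, u i g <= 1) -> U i j <= m%:R.
Proof.
move=> u_le1; rewrite /bundle_util.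
apply: (le_trans (ler_sum _ (fun g _ => u_le1 g))).
by rewrite sumr_const ler_nat (leq_trans (max_card _)) ?card_ord.
Qed.

Lemma WEF_cleared_infeasible (c : R) :
  (0 < m)%N -> 0 <= c -> m%:R * w a <= c * w b ->
  (forall i g, c < u i g <= 1) -> ~ WEF_cleared w u A.
Proof.
move=> m_gt0 c_ge0 c_large u_in [Wa Wb].
have wa := w_gt0 a; have wb := w_gt0 b.
have u_gt i g : c < u i g by case/andP: (u_in i g).
have u_ge0 i g : 0 <= u i g by apply: ltW; apply: le_lt_trans (u_gt i g).
have u_le1 i g : u i g <= 1 by case/andP: (u_in i g).
case: (pickP (fun g => A g == a)) => [g /eqP Ag | noa].
- have Uba : c < U b a.
    by rewrite -[X in U _ X]Ag (lt_le_trans (u_gt b g)) // bundle_util_ge_item.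
  have := bundle_util_le_size b b (u_le1 b); nra.
- have Uaa : U a a = 0 by rewrite /bundle_util big_pred0.
  pose g0 : 'I_m := Ordinal m_gt0.
  have Ag0 : A g0 = b by case: (ord2P (A g0)) (noa g0) => ->; rewrite ?eqxx.
  have Uab : c < U a b.
    by rewrite -[X in U _ X]Ag0 (lt_le_trans (u_gt a g0)) // bundle_util_ge_item.
  rewrite Uaa in Wa; nra.
Qed.

End two_agents.

Section union_bound.
Context {d} {R : realFieldType} {T : semiRingOfSetsType d}.
Variable mu : {content set T -> \bar R}.

Lemma measure_le_fin_cover (K : finType) (S : set T) (E : K -> set T) (e : R) :
  measurable S -> (forall k, measurable (E k)) -> S `<=` \bigcup_k E k ->
  (forall k, (mu (E k) <= e%:E)%E) -> (mu S <= (#|K|%:R * e)%:E)%E.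
Proof.
move=> mS mE SE muE.
apply: (le_trans (content_sub_fsum _ finite_finset (fun k _ => mE k) mS SE)).
rewrite (fsbigE (enum K)) ?enum_uniq //=; last by move=> k _; rewrite mem_enum.
apply: (le_trans (lee_sum _ (fun k _ => muE k))).
rewrite sumEFin big_enum_cond /=.
under eq_bigl do rewrite in_setT.
by rewrite sumr_const mulr_natl.
Qed.

End union_bound.

Section pdf_bounded.
Context {R : realType} {alpha beta : R} {f : R -> R}.
Hypotheses (alpha_ge0 : 0 <= alpha) (f_pdf : pdf_bounded alpha beta f).

Lemma pdf_bounded_ge0 x : 0 <= f x.
Proof.
have [_ [f_in f_out]] := f_pdf.
have [/f_in/andP[+ _]|/f_out ->] := pselect (0 <= x <= 1); last by [].
exact: le_trans.
Qed.

Lemma pdf_bounded_le_indic x : f x <= beta * \1_`[0, 1] x.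
Proof.
have [_ [f_in f_out]] := f_pdf.
have [x01|x01] := pselect (0 <= x <= 1); rewrite indicE.
  by rewrite mem_set ?mulr1; [case/andP: (f_in x x01)|rewrite /= in_itv].
by rewrite f_out // memNset ?mulr0 //= in_itv.
Qed.

Lemma pdf_bounded_beta_ge0 : 0 <= beta.
Proof.
have [_ [f_in _]] := f_pdf.
have /andP[_ f0_le] : alpha <= f 0 <= beta by apply: f_in; rewrite lexx ler01.
exact: le_trans (pdf_bounded_ge0 0) f0_le.
Qed.

Context {d : measure_display} {Omega : measurableType d}.
Context {P : probability Omega R} {Y : Omega -> R}.
Hypothesis Y_f : has_density P Y f.

Lemma has_density_le (B : set R) : measurable B ->
  (P (Y @^-1` B) <= beta%:E * lebesgue_measure (`[0%R, 1%R] `&` B))%E.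
Proof.
move=> mB; have [mf _] := f_pdf.
have mI : measurable (`[0, 1]%classic : set R) by exact: measurable_itv.
rewrite Y_f // -integral_indic //.
rewrite -ge0_integralZl_EFin //; last 2 first.
- by apply/measurable_EFinP; exact: measurable_indic.
- exact: pdf_bounded_beta_ge0.
apply: ge0_le_integral => //.
- by move=> x _; rewrite lee_fin pdf_bounded_ge0.
- by apply/measurable_EFinP; apply: measurable_funS mf.
- by apply/measurable_EFinP; apply: measurable_funM => //; exact: measurable_indic.
- by move=> x _; rewrite lee_fin pdf_bounded_le_indic.
Qed.

Lemma has_density_notin_Ioc1 (c : R) : 0 <= c ->
  (P (Y @^-1` ~` `]c, 1%R]) <= (beta * c)%:E)%E.
Proof.
move=> c_ge0; have mB : measurable (~` `]c, 1]%classic : set R).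
  by apply: measurableC; exact: measurable_itv.
apply: (le_trans (has_density_le _ mB)); rewrite EFinM lee_wpmul2l ?lee_fin //.
  exact: pdf_bounded_beta_ge0.
apply: (@le_trans _ _ (lebesgue_measure (`[0, c]%classic : set R))).
  apply: le_measure; rewrite ?inE; [|exact: measurable_itv|].
  - by apply: measurableI => //; exact: measurable_itv.
  - move=> x [/=]; rewrite !in_itv /= => /andP[-> x1] xc; apply: contra_notT xc.
    by rewrite -ltNge => cx; rewrite cx x1.
by rewrite lebesgue_measure_itv /= lte_fin; case: ifP; rewrite ?oppr0 ?adde0 // lee_fin.
Qed.

End pdf_bounded.

Section measurability.
Context {d} {Omega : measurableType d} {R : realType}.

Lemma measurable_ler (f g : Omega -> R) :
  measurable_fun setT f -> measurable_fun setT g -> measurable [set om | f om <= g om].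
Proof.
move=> mf mg.
by have := measurable_fun_ler mf mg measurableT (Y := [set true]) I; rewrite setTI.
Qed.

Lemma measurable_exists_fun (I J : finType) (Q : (I -> J) -> set Omega) :
  (forall F, measurable (Q F)) -> measurable [set om | exists F, Q F om].
Proof.
move=> mQ; have -> : [set om | exists F, Q F om] = \bigcup_(F : {ffun I -> J}) Q F.
  apply/seteqP; split=> om /= [F QF]; last by exists F.
  exists (finfun F) => //.
  by rewrite (_ : fun_of_fin _ = F) //; apply/funext => x; rewrite ffunE.
by apply: fin_bigcup_measurable => //; exact: finite_finset.
Qed.

Context {m : nat} {X : 'I_2 * 'I_m -> Omega -> R}.
Hypothesis mX : forall k, measurable_fun setT (X k).
Local Notation u om := (fun i g => X (i, g) om).

Lemma measurable_bundle_util A i j :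
  measurable_fun setT (fun om => bundle_util (u om) A i j).
Proof.
rewrite /bundle_util; under eq_fun do rewrite big_mkcond /=.
by apply: measurable_sum => g; case: (A g == j) => //; exact: mX.
Qed.

Lemma measurable_WEF_cleared (w : 'I_2 -> R) :
  measurable [set om | exists A, WEF_cleared w (u om) A].
Proof.
apply: measurable_exists_fun => A.
by apply: measurableI; apply: measurable_ler; apply: measurable_funM => //;
  exact: measurable_bundle_util.
Qed.

End measurability.

Section no_fair_allocation.
Context {R : realType} {d : measure_display} {Omega : measurableType d}.
Context {P : probability Omega R} {m : nat}.
Context {X : 'I_2 * 'I_m -> Omega -> R} {w : 'I_2 -> R}.
Hypothesis w_gt0 : forall i, 0 < w i.
Local Notation u om := (fun i g => X (i, g) om).

Lemma WEF_eventE :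
  [set om | exists A, WEF w (u om) A] = [set om | exists A, WEF_cleared w (u om) A].
Proof. by apply/seteqP; split=> om [A /(WEF_clearedE w_gt0)]; exists A. Qed.

Lemma WPROP_eventE :
  [set om | exists A, WPROP w (u om) A] = [set om | exists A, WEF_cleared w (u om) A].
Proof. by apply/seteqP; split=> om [A /(WPROP_clearedE w_gt0)]; exists A. Qed.

Lemma prob_WEF_cleared_le {alpha beta c : R} {f : R -> R} :
  (0 < m)%N -> 0 <= alpha -> pdf_bounded alpha beta f ->
  (forall k, measurable_fun setT (X k)) -> (forall k, has_density P (X k) f) ->
  0 <= c -> m%:R * w a <= c * w b ->
  (P [set om | exists A, WEF_cleared w (u om) A] <= ((2 * m)%:R * (beta * c))%:E)%E.
Proof.
move=> m_gt0 alpha_ge0 f_pdf mX X_f c_ge0 c_large.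
have -> : (2 * m)%N = #|{: 'I_2 * 'I_m}| by rewrite card_prod !card_ord.
apply: (measure_le_fin_cover P _ _ (fun k => X k @^-1` ~` `]c, 1%R])).
- exact: measurable_WEF_cleared.
- move=> k; rewrite -[X in measurable X]setTI.
  by apply: mX => //; apply: measurableC; exact: measurable_itv.
- move=> om [A WA]; apply: contrapT => all_in.
  apply: (WEF_cleared_infeasible w_gt0 c m_gt0 c_ge0 c_large _ WA) => i g.
  by apply: contrapT => g_out; apply: all_in; exists (i, g).
- by move=> k; apply: (has_density_notin_Ioc1 alpha_ge0 f_pdf (X_f k)).
Qed.

End no_fair_allocation.

Theorem theorem5 (R : realType) (alpha beta : R) :
  0 < alpha -> 0 < beta ->
  exists C : R, 0 < C /\
  forall (d : measure_display) (Omega : measurableType d)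
         (P : probability Omega R) (m : nat) (f : R -> R)
         (X : 'I_2 * 'I_m -> Omega -> R) (w : 'I_2 -> R),
    (0 < m)%N ->
    pdf_bounded alpha beta f ->
    (forall k, measurable_fun setT (X k)) ->
    (forall k, has_density P (X k) f) ->
    mutually_independent P X ->
    (forall i, 0 < w i) ->
    1 <= w (lift ord0 ord0) / w ord0 ->
    let r := w (lift ord0 ord0) / w ord0 in
    (P [set om | exists A : 'I_m -> 'I_2,
                   WEF w (fun i g => X (i, g) om) A]
       <= (C * (m%:R ^+ 2) / r)%:E)%E /\
    (P [set om | exists A : 'I_m -> 'I_2,
                   WPROP w (fun i g => X (i, g) om) A]
       <= (C * (m%:R ^+ 2) / r)%:E)%E.
Proof.
move=> alpha_gt0 beta_gt0; exists (2 * beta); split; first by rewrite mulr_gt0.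
move=> d Omega P m f X w m_gt0 f_pdf mX X_f _ w_gt0 r_ge1 r.
have [wa wb] := (w_gt0 a, w_gt0 b).
pose c := m%:R / r.
have c_ge0 : 0 <= c by rewrite divr_ge0 // (le_trans ler01).
have c_large : m%:R * w a <= c * w b.
  by rewrite le_eqVlt; apply/orP; left; apply/eqP; rewrite /c /r; field; rewrite ?gt_eqF.
have -> : 2 * beta * m%:R ^+ 2 / r = (2 * m)%:R * (beta * c).
  by rewrite natrM /c; ring.
rewrite (WEF_eventE w_gt0) (WPROP_eventE w_gt0).
by split; apply: (prob_WEF_cleared_le w_gt0 m_gt0 (ltW alpha_gt0) f_pdf mX X_f c_ge0 c_large).
Qed.
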